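(* Let $G$ be a trigraph and $\Gamma\subseteq\operatorname{Aut}(G)$ a group of automorphisms. For every vertex $v\in V(G)$, $\deg_{G/\Gamma}(v^\Gamma)\leq\deg_G(v)$. In particular, $\Delta(G/\Gamma)\leq\Delta(G)$.
   Context: A trigraph is a finite simple graph whose edges are each colored red or black. $\operatorname{Aut}(G)$ is the automorphism group of the underlying simple graph of $G$ (automorphisms need not preserve edge colors). For $v\in V(G)$, $v^\Gamma$ is the orbit of $v$ under $\Gamma$. For a partition $\mathcal{P}$ of $V(G)$, the quotient trigraph $G/\mathcal{P}$ has vertex set $\mathcal{P}$; two distinct parts $U,W$ are joined by a black edge if every pair $\{u,w\}$ with $u\in U,w\in W$ is a black edge of $G$, are non-adjacent if no such pair is an edge, and are joined by a red edge otherwise. $G/\Gamma$ denotes $G/\mathcal{P}$ for $\mathcal{P}$ the partition of $V(G)$ into $\Gamma$-orbits. Degrees count edges of both colors; $\Delta$ denotes maximum degree. *)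

From mathcomp Require Import all_boot all_fingroup.
Set Implicit Arguments. Unset Strict Implicit. Unset Printing Implicit Defensive.
Import GroupScope.

Record trigraph (T : finType) := Trigraph {
  black : rel T;
  red : rel T;
  black_sym : symmetric black;
  red_sym : symmetric red;
  black_irr : irreflexive black;
  red_irr : irreflexive red;
  black_red_disj : forall x y, ~~ (black x y && red x y)
}.

Section TG.
Variables (T : finType) (G : trigraph T).

Definition adj (x y : T) : bool := black G x y || red G x y.

Definition deg (v : T) : nat := #|[set w | adj v w]|.

Definition maxdeg : nat := \max_(v : T) deg v.

(* Aut(G): automorphisms of the underlying simple graph (colours ignored) *)
Definition AutT : {set {perm T}} :=
  [set g : {perm T} | [forall x, forall y, adj (g x) (g y) == adj x y]].

(* quotient trigraph G / P on the parts of P *)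
Definition qblack (U W : {set T}) : bool :=
  (U != W) && [forall u in U, forall w in W, black G u w].
Definition qnonadj (U W : {set T}) : bool :=
  [forall u in U, forall w in W, ~~ adj u w].
Definition qred (U W : {set T}) : bool :=
  (U != W) && ~~ qblack U W && ~~ qnonadj U W.

Definition qdeg (P : {set {set T}}) (U : {set T}) : nat :=
  #|[set W in P | qblack U W || qred U W]|.

Definition qmaxdeg (P : {set {set T}}) : nat := \max_(U in P) qdeg P U.

Definition vorbit (Gam : {group {perm T}}) (v : T) : {set T} := orbit 'P Gam v.

Definition orbitPart (Gam : {group {perm T}}) : {set {set T}} :=
  [set vorbit Gam v | v : T].

End TG.

From mathcomp Require Import all_boot all_fingroup.
Import GroupScope.
Set Implicit Arguments. Unset Strict Implicit. Unset Printing Implicit Defensive.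

(* An orbit W adjacent to v^Gamma in G/Gamma (by a black or red edge) contains
   a vertex w adjacent in G to some u in v^Gamma.  Moving that edge by the
   automorphism sending u back to v gives a neighbour of v lying in W.  So every neighbour of
   v^Gamma is the orbit of a neighbour of v, and there are at most deg v of them. *)

Section QuotientNeighbours.

Variables (T : finType) (G : trigraph T).

Lemma AutT_adj (g : {perm T}) (x y : T) :
  g \in AutT G -> adj G (g x) (g y) = adj G x y.
Proof. by rewrite inE => /forallP /(_ x) /forallP /(_ y) /eqP. Qed.

Lemma qadj_exists_edge (U W : {set T}) (u0 w0 : T) :
  u0 \in U -> w0 \in W -> qblack G U W || qred G U W ->
  exists2 u, u \in U & exists2 w, w \in W & adj G u w.
Proof.
move=> Uu0 Ww0 /orP [/andP [_ /forall_inP /(_ u0 Uu0) /forall_inP /(_ w0 Ww0) b]|].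
  by exists u0 => //; exists w0; rewrite // /adj b.
rewrite /qred /qnonadj negb_forall_in => /andP [_ /exists_inP [u Uu]].
by rewrite negb_forall_in => /exists_inP [w Ww]; rewrite negbK; exists u => //; exists w.
Qed.

Variables (Gam : {group {perm T}}).
Hypothesis GamAut : Gam \subset AutT G.

Lemma adj_orbit_neighbour (v u w : T) :
  u \in vorbit Gam v -> adj G u w ->
  exists2 w', adj G v w' & vorbit Gam w' = vorbit Gam w.
Proof.
case/orbitP=> g Gg <-{u} /= gvw.
have vw : adj G v (g^-1 w) by rewrite -(AutT_adj _ _ (subsetP GamAut g Gg)) permKV.
exists (g^-1 w) => //; apply/orbit_eqP.
by rewrite -[g^-1 w]apermE mem_orbit ?groupV.
Qed.

Lemma qneighbours_orbit_sub (v : T) :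
  [set W in orbitPart Gam | qblack G (vorbit Gam v) W || qred G (vorbit Gam v) W]
    \subset vorbit Gam @: [set w | adj G v w].
Proof.
apply/subsetP=> _ /setIdP [/imsetP [x _ ->] /qadj_exists_edge qadj].
have [u Uu [w Ww uw]] := qadj v x (orbit_refl _ _ _) (orbit_refl _ _ _).
have [w' vw' ww'] := adj_orbit_neighbour Uu uw.
have -> : vorbit Gam x = vorbit Gam w' by rewrite ww'; apply/esym/orbit_eqP.
by rewrite imset_f ?inE.
Qed.

Lemma qdeg_orbit_le (v : T) : qdeg G (orbitPart Gam) (vorbit Gam v) <= deg G v.
Proof.
exact: leq_trans (subset_leq_card (qneighbours_orbit_sub v)) (leq_imset_card _ _).
Qed.

End QuotientNeighbours.

Theorem mainTheorem13 (T : finType) (G : trigraph T) (Gam : {group {perm T}}) :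
  Gam \subset AutT G ->
  (forall v : T, qdeg G (orbitPart Gam) (vorbit Gam v) <= deg G v) /\
  qmaxdeg G (orbitPart Gam) <= maxdeg G.
Proof.
move=> GamAut; split=> [v|]; first exact: qdeg_orbit_le.
apply/bigmax_leqP=> _ /imsetP [v _ ->].
exact: leq_trans (qdeg_orbit_le GamAut v) (leq_bigmax (F := deg G) v).
Qed.
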